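(* Let $r,s\in(0,1)$ satisfy \[s = 2r(1-r)\qquad\text{and}\qquad r = 3s(1-s)^2 + 3s^2(1-s).\] Then the number $\beta = 1/r - 1$ is not an algebraic integer.
   Context: An algebraic integer is a complex number that is a root of a monic polynomial with integer coefficients. *)

From mathcomp Require Export all_boot all_order all_algebra all_field.

From mathcomp Require Import all_boot all_order all_algebra all_field.
From mathcomp Require Import ring zify.
Import Order.TTheory GRing.Theory Num.Theory.
Local Open Scope ring_scope.

(* Eliminating s, the equation for r != 0 becomes 4 (1 - r)^3 = (2 r - 1)^3,
   i.e. beta satisfies 4 beta^3 = (1 - beta)^3, a root of 5 x^3 - 3 x^2 + 3 x - 1.
   A rational root y of this cubic would make (1 - y) / y a rational, hence
   integral, cube root of 4; so the cubic is irreducible over Q and, divided by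
   5, it is the minimal polynomial of beta.  Its constant coefficient -1/5 is not
   an integer, so beta is not an algebraic integer. *)

Local Notation pQtoC := (map_poly (ratr : rat -> algC)).

Lemma minCpoly_irreducible {p : {poly rat}} {x : algC} :
  p \is monic -> irreducible_poly p -> root (pQtoC p) x ->
  minCpoly x = pQtoC p.
Proof.
move=> mon_p irr_p px0; have [q [Dq mon_q] dv_q] := minCpolyP x.
have q_dv_p : q %| p by rewrite -dv_q.
have q_gt1 : (1 < size q)%N by have := size_minCpoly x; rewrite Dq size_map_poly.
case: (irredp_XsubCP irr_p q_dv_p) => [q_eqp1 | q_eqp_p].
  by move: q_gt1; rewrite (eqp_size q_eqp1) size_poly1.
by move: q_eqp_p; rewrite eqp_monic // => /eqP <-.
Qed.

Lemma Crat_rootXn_int (n : nat) (c z : algC) :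
  (0 < n)%N -> c \in Num.int -> z ^+ n = c -> z \in Crat -> z \in Num.int.
Proof.
move=> n_gt0 Zc zn_c Qz; apply: Cint_rat_Aint => //.
apply: (@root_monic_Aint ('X^n - c%:P)); first by rewrite /root !hornerE zn_c subrr.
  exact: monicXnsubC.
by rewrite polyOverXnsubC.
Qed.

Lemma int_cube_neq4 (k : int) : k ^+ 3 != 4.
Proof.
rewrite !exprS expr0 mulr1; apply/eqP => k3.
have [k_le0 | k_gt0] : k <= 0 \/ 0 < k by lia.
  have : k * (k * k) <= 0 by nia.
  lia.
have [k1 | k_ge2] : k = 1 \/ 2 <= k by lia.
  by rewrite k1 in k3.
have : 8 <= k * (k * k) by nia.
lia.
Qed.

Lemma Crat_cube_neq4 (z : algC) : z \in Crat -> z ^+ 3 != 4.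
Proof.
move=> Qz; apply/eqP => z3.
have /intrP[k Dk] := Crat_rootXn_int 3 4 z isT (rpred_nat _ 4) z3 Qz.
move: z3; rewrite Dk -rmorphXn /= -[4 : algC]/(4%:~R) => /eqP.
by rewrite eqr_int (negPf (int_cube_neq4 k)).
Qed.

(* [4 x^3 - (1 - x)^3 = 5 x^3 - 3 x^2 + 3 x - 1], made monic. *)
Definition beta_poly : {poly rat} := Poly [:: -1/5; 3/5; -3/5; 1].

Lemma beta_polyE : beta_poly = [:: -1/5; 3/5; -3/5; 1] :> seq rat.
Proof. by rewrite /beta_poly (PolyK (c := 0)) //= oner_eq0. Qed.

Lemma size_beta_poly : size beta_poly = 4%N.
Proof. by rewrite beta_polyE. Qed.

Lemma beta_poly_monic : beta_poly \is monic.
Proof. by rewrite monicE lead_coefE beta_polyE. Qed.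

Lemma horner_beta_poly (x : algC) :
  5 * (pQtoC beta_poly).[x] = 4 * x ^+ 3 - (1 - x) ^+ 3.
Proof.
rewrite /beta_poly map_Poly horner_Poly /=.
by rewrite !(fmorph_div, rmorphN, rmorph1, rmorph_nat); field.
Qed.

Lemma root_beta_poly (x : algC) :
  root (pQtoC beta_poly) x = (4 * x ^+ 3 == (1 - x) ^+ 3).
Proof.
by rewrite /root -[RHS]subr_eq0 -horner_beta_poly mulf_eq0 pnatr_eq0.
Qed.

Lemma Crat_cube_ratio_neq4 (y : algC) : y \in Crat -> 4 * y ^+ 3 != (1 - y) ^+ 3.
Proof.
move=> Qy; apply/eqP => y_eq.
have y_neq0 : y != 0.
  apply: contra_eqN y_eq => /eqP->.
  by rewrite subr0 expr1n expr0n mulr0 eq_sym oner_eq0.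
have Qz : (1 - y) / y \in Crat by rewrite rpred_div ?rpredB ?rpred1.
move/eqP: (Crat_cube_neq4 _ Qz); apply.
by rewrite expr_div_n -y_eq mulfK // expf_neq0.
Qed.

Lemma beta_poly_irreducible : irreducible_poly beta_poly.
Proof.
apply: cubic_irreducible; first by rewrite size_beta_poly.
move=> a; rewrite -(fmorph_root (ratr : rat -> algC)) root_beta_poly.
exact: Crat_cube_ratio_neq4 (Crat_rat a).
Qed.

Lemma notAint_cube_ratio (b : algC) : 4 * b ^+ 3 = (1 - b) ^+ 3 -> b \notin Aint.
Proof.
move=> /eqP b_root; rewrite -root_beta_poly in b_root.
rewrite unfold_in (minCpoly_irreducible beta_poly_monic beta_poly_irreducible b_root).
(* the constant coefficient [-1/5] is not an integer *)
by apply/negP => /polyOverP/(_ 0%N); rewrite coef_map beta_polyE /= Cint_rat.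
Qed.

Theorem mainTheorem2 (r s : algC) :
  0 < r < 1 -> 0 < s < 1 ->
  s = 2 * r * (1 - r) ->
  r = 3 * s * (1 - s) ^+ 2 + 3 * s ^+ 2 * (1 - s) ->
  (1 / r - 1) \notin Aint.
Proof.
move=> /andP[r_gt0 _] _ Ds Dr; have r_neq0 : r != 0 by rewrite gt_eqF.
have : 3 * s * (1 - s) ^+ 2 + 3 * s ^+ 2 * (1 - s) - r
       = r * (4 * (1 - r) ^+ 3 - (2 * r - 1) ^+ 3) by rewrite Ds; ring.
rewrite -Dr subrr => /esym/eqP; rewrite mulf_eq0 (negPf r_neq0) subr_eq0.
move=> /eqP cubic_r; apply: notAint_cube_ratio.
have -> : 1 / r - 1 = (1 - r) / r by field.
have -> : 1 - (1 - r) / r = (2 * r - 1) / r by field.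
by rewrite !expr_div_n mulrA cubic_r.
Qed.
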